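(* Let $R$ be an integral domain, $n\ge 2$, and let $a_1,\dots,a_n,c\in R$. Then \[ \det V(a_1,\dots,a_n)=\det V(a_1-c,a_2-c,\dots,a_n-c), \] where $V$ denotes the Vieta matrix.
   Context: For elements $b_1,\dots,b_m$ of a commutative ring and an integer $j\ge 0$, let $e_j(b_1,\dots,b_m)$ denote the $j$-th elementary symmetric polynomial, i.e. $e_0=1$ and $e_j(b_1,\dots,b_m)=\sum_{1\le l_1<\dots<l_j\le m} b_{l_1}\cdots b_{l_j}$ for $1\le j\le m$. The Vieta matrix $V(a_1,\dots,a_n)$ of $a_1,\dots,a_n$ is the $n\times n$ matrix whose entry in row $j+1$ and column $i$ (for $j=0,1,\dots,n-1$ and $i=1,\dots,n$) is $e_j(a_1,\dots,a_{i-1},a_{i+1},\dots,a_n)$, the $j$-th elementary symmetric polynomial of the $n-1$ elements obtained by omitting $a_i$. *)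

From HB Require Import structures.
From mathcomp Require Import all_boot all_order all_algebra.
Set Implicit Arguments. Unset Strict Implicit. Unset Printing Implicit Defensive.
Import GRing.Theory.
Local Open Scope ring_scope.

Definition esym (R : comNzRingType) (m : nat) (b : 'I_m -> R) (j : nat) : R :=
  \sum_(S : {set 'I_m} | #|S| == j) \prod_(l in S) b l.

Definition omit (R : Type) (n : nat) (a : 'I_n.+1 -> R) (i : 'I_n.+1) : 'I_n -> R :=
  fun k => a (lift i k).

(* The Vieta matrix of a_1..a_n (here n = n'.+1): entry in row j (0-based,
   j = 0..n-1) and column i is e_j(a with a_i omitted). *)
Definition vieta (R : comNzRingType) (n : nat) (a : 'I_n.+1 -> R) : 'M[R]_n.+1 :=
  \matrix_(j < n.+1, i < n.+1) esym (omit a i) j.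

From Pilot Require Import Defs.
From HB Require Import structures.
From mathcomp Require Import all_boot all_order all_algebra.
From mathcomp Require Import ring.
Import GRing.Theory.
Local Open Scope ring_scope.

(* Column i of [vieta a] lists the coefficients of the generating polynomial
   \prod_(k <> i) (1 + a_k 'X).  Shifting every a_k by -c rewrites each factor
   as a_k 'X + (1 - c 'X), and expanding the product gives
   \sum_l e_l 'X^l (1 - c 'X)^(m - l).  Hence the shifted Vieta matrix is
   T *m vieta a, where column l of T holds the coefficients of
   'X^l (1 - c 'X)^(m - l); this polynomial starts with 'X^l, so T is
   unitriangular and has determinant 1. *)

Lemma card_setC_ord (m : nat) (J : {set 'I_m}) : #|~: J| = (m - #|J|)%N.
Proof. by rewrite -(addKn #|J| #|~: J|) cardsC card_ord. Qed.

Lemma prod_mulr_addr_esym {R : comNzRingType} (m : nat) (b : 'I_m -> R)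
    (x y : R) :
  \prod_(k < m) (b k * x + y) =
  \sum_(l < m.+1) Defs.esym b l * (x ^+ l * y ^+ (m - l)).
Proof.
rewrite bigA_distr.
have expand_subset (J : {set 'I_m}) :
    \prod_(i < m) (if i \in J then b i * x else y) =
    \prod_(i in J) b i * (x ^+ #|J| * y ^+ (m - #|J|)).
  rewrite (bigID (mem J)) /=.
  under eq_bigr => i iJ do rewrite iJ.
  under [X in _ * X]eq_bigr => i iJ do rewrite (negbTE iJ).
  rewrite big_split /= !prodr_const mulrA -card_setC_ord.
  by congr (_ * _ ^+ _); apply: eq_card => i; rewrite inE.
under eq_bigr => J _ do rewrite expand_subset.
have card_le (J : {set 'I_m}) : (#|J| < m.+1)%N.
  by rewrite ltnS -[X in (_ <= X)%N]card_ord max_card.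
rewrite (partition_big (fun J : {set 'I_m} => Ordinal (card_le J)) xpredT) //=.
apply: eq_bigr => l _; rewrite /Defs.esym big_distrl /=.
by apply: congr_big => // J; rewrite -val_eqE // => /eqP <-.
Qed.

Lemma esym_rmorph {R S : comNzRingType} (f : {rmorphism R -> S}) (m : nat)
    (b : 'I_m -> R) (j : nat) :
  Defs.esym (f \o b) j = f (Defs.esym b j).
Proof.
by rewrite /Defs.esym rmorph_sum; apply: eq_bigr => J _; rewrite rmorph_prod.
Qed.

Lemma prod_polyC_esym {R : comNzRingType} (m : nat) (b : 'I_m -> R)
    (G : {poly R}) :
  \prod_(k < m) ((b k)%:P * 'X + G) =
  \sum_(l < m.+1) (Defs.esym b l)%:P * ('X^l * G ^+ (m - l)).
Proof.
rewrite (prod_mulr_addr_esym _ (fun k => (b k)%:P)).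
by apply: eq_bigr => l _; rewrite -(esym_rmorph polyC).
Qed.

Lemma coef_prod_esym {R : comNzRingType} (m : nat) (b : 'I_m -> R)
    (j : 'I_m.+1) :
  (\prod_(k < m) ((b k)%:P * 'X + 1))`_j = Defs.esym b j.
Proof.
rewrite prod_polyC_esym coef_sum (bigD1 j) //= big1 ?addr0.
  by rewrite expr1n mulr1 coefCM coefXn eqxx mulr1.
move=> l ne_lj; rewrite expr1n mulr1 coefCM coefXn.
by rewrite eq_sym (inj_eq val_inj) (negbTE ne_lj) mulr0.
Qed.

Definition vieta_shift_mx {R : comNzRingType} (m : nat) (c : R) : 'M[R]_m.+1 :=
  \matrix_(j, l) ('X^l * (1 - c%:P * 'X) ^+ (m - l))`_j.

Lemma vieta_shift {R : comNzRingType} (m : nat) (a : 'I_m.+1 -> R) (c : R) :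
  vieta (fun i => a i - c) = vieta_shift_mx m c *m vieta a.
Proof.
apply/matrixP => j i; rewrite !mxE -coef_prod_esym.
have -> : \prod_(k < m) ((omit (fun i => a i - c) i k)%:P * 'X + 1) =
    \prod_(k < m) ((omit a i k)%:P * 'X + (1 - c%:P * 'X)).
  by apply: eq_bigr => k _; rewrite /omit polyCB; ring.
rewrite prod_polyC_esym coef_sum; apply: eq_bigr => l _.
by rewrite !mxE coefCM mulrC.
Qed.

Lemma det_vieta_shift_mx {R : comNzRingType} (m : nat) (c : R) :
  \det (vieta_shift_mx m c) = 1.
Proof.
rewrite det_trig; last first.
  by apply/is_trig_mxP => j l lt_jl; rewrite mxE coefXnM lt_jl.
apply: big1 => l _; rewrite mxE coefXnM ltnn subnn -horner_coef0.
by rewrite !hornerE subr0 expr1n.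
Qed.

Lemma det_vieta_shift {R : comNzRingType} (m : nat) (a : 'I_m.+1 -> R) (c : R) :
  \det (vieta (fun i => a i - c)) = \det (vieta a).
Proof. by rewrite vieta_shift det_mulmx det_vieta_shift_mx mul1r. Qed.

(* The identity holds over any commutative ring and for every size. *)
Theorem corollary1 (R : idomainType) (n : nat) (hn : (2 <= n)%N)
  (a : 'I_n.-1.+1 -> R) (c : R) :
  \det (vieta a) = \det (vieta (fun i => a i - c)).
Proof. by rewrite det_vieta_shift. Qed.
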